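(* Let $k\ge1$ and $n,m\in A_{2k}$. If $\max\mathcal{CG}(n)<\max\mathcal{CG}(m)$, then $n<m$.
   Context: Fibonacci numbers: $F_1=F_2=1$, $F_{n+1}=F_n+F_{n-1}$ for $n\ge2$. Chung–Graham decomposition: every positive integer $n$ has a unique representation $n=\sum_{i\ge1}c_iF_{2i}$ with $c_i\in\{0,1,2\}$, only finitely many nonzero, such that whenever $c_i=c_j=2$ with $i<j$ there is $k$ with $i<k<j$ and $c_k=0$. Let $\mathcal{CG}(n)$ be the set of $F_{2i}$ with $c_i\neq0$. For $k\ge1$, $A_{2k}=\{n\ge1:\min\mathcal{CG}(n)=F_{2k}\}$. *)

From mathcomp Require Import all_boot.
Set Implicit Arguments. Unset Strict Implicit. Unset Printing Implicit Defensive.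

Fixpoint fib (n : nat) : nat :=
  match n with
  | 0 => 0
  | 1 => 1
  | (p.+1 as q).+1 => fib q + fib p
  end.

(* A digit sequence c encodes (c_1, c_2, ...) : entry nth 0 c i is c_{i+1},
   the coefficient of F_{2(i+1)}; entries beyond size c are 0. *)
Definition cg_value (c : seq nat) : nat :=
  \sum_(i < size c) nth 0 c i * fib (2 * i.+1).

Definition cg_admissible (c : seq nat) : Prop :=
  (forall i, nth 0 c i <= 2) /\
  (forall i j, i < j -> nth 0 c i = 2 -> nth 0 c j = 2 ->
     exists k, i < k < j /\ nth 0 c k = 0).

(* c is the Chung-Graham decomposition of n (unique by the Chung-Graham theorem). *)
Definition is_CG (n : nat) (c : seq nat) : Prop :=
  cg_admissible c /\ cg_value c = n.

Definition CGset (c : seq nat) : seq nat :=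
  [seq fib (2 * i.+1) | i <- iota 0 (size c) & nth 0 c i != 0].

Definition seq_min (s : seq nat) : nat := foldr minn (head 0 s) s.
Definition seq_max (s : seq nat) : nat := \max_(x <- s) x.

Definition in_A (k n : nat) : Prop :=
  1 <= n /\ forall c, is_CG n c -> seq_min (CGset c) = fib (2 * k).

From mathcomp Require Import all_boot zify.

Set Implicit Arguments.
Unset Strict Implicit.
Unset Printing Implicit Defensive.

(* An admissible digit string c_1 ... c_t has value < F_{2t+2}, and even
   < F_{2t+1} when each of its 2's is followed by a 0; both bounds go through
   together by induction on t, appending one digit.  The same induction,
   choosing the top digit greedily, gives every n an admissible decomposition.
   Now if F_{2J} = max CG(m) exceeds every term of CG(n), the decomposition of
   n only uses F_2, ..., F_{2J-2}, so n < F_{2J} <= m. *)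

Lemma fibSS n : fib n.+2 = fib n.+1 + fib n.
Proof. by []. Qed.

Lemma fib_gt0 n : 0 < fib n.+1.
Proof. by elim: n => // -[|n] //= IH; rewrite addn_gt0 IH. Qed.

Lemma leq_fib : {homo fib : m n / m <= n}.
Proof.
apply: homo_leq => [//|m n p|[|n] //=]; [exact: leq_trans | exact: leq_addr].
Qed.

Lemma ltn_fibSS n : n < fib n.+2.
Proof. by elim: n => // n IH; rewrite fibSS; have := fib_gt0 n; lia. Qed.

Lemma nth_neq0_lt_size (c : seq nat) i : nth 0 c i != 0 -> i < size c.
Proof. by apply: contraR; rewrite -leqNgt => /(nth_default 0) ->. Qed.

Lemma nth0_rcons (c : seq nat) x i :
  nth 0 (rcons c x) i = if i == size c then x else nth 0 c i.
Proof.
rewrite nth_rcons; case: ltngtP => // lt_ci.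
by rewrite nth_default // ltnW.
Qed.

Lemma nth_take0 j (c : seq nat) i :
  nth 0 (take j c) i = if i < j then nth 0 c i else 0.
Proof.
case: ltnP => [lt_ij | le_ji]; first exact: nth_take.
by apply: nth_default; rewrite size_take_min geq_min le_ji.
Qed.

Lemma seq_max_gt_mem X s : X < seq_max s -> exists2 y, y \in s & X < y.
Proof.
move=> lt_max; apply/hasP; apply/negPn/negP => /hasPn le_all.
suff : seq_max s <= X by rewrite leqNgt lt_max.
by apply/bigmax_leqP_seq => y /le_all; rewrite -leqNgt.
Qed.

Definition cg_closed (c : seq nat) : Prop :=
  forall i, nth 0 c i = 2 -> exists k, i < k < size c /\ nth 0 c k = 0.

Lemma cg_value_rcons c x :
  cg_value (rcons c x) = cg_value c + x * fib (2 * (size c).+1).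
Proof.
rewrite /cg_value size_rcons big_ord_recr /= nth0_rcons eqxx.
by congr (_ + _); apply: eq_bigr => i _; rewrite nth0_rcons ltn_eqF.
Qed.

Lemma cg_admissible_rcons c x :
  cg_admissible (rcons c x) <->
  [/\ x <= 2, cg_admissible c & x = 2 -> cg_closed c].
Proof.
have nth_c i : i < size c -> nth 0 (rcons c x) i = nth 0 c i.
  by move=> lt_ic; rewrite nth0_rcons ltn_eqF.
have c2_lt_size i : nth 0 c i = 2 -> i < size c.
  by move=> ci2; apply: nth_neq0_lt_size; rewrite ci2.
split=> [[le2 gap] | [le_x2 [le2 gap] cl2]].
  split=> [|| x2 i ci2].
  - by have := le2 (size c); rewrite nth0_rcons eqxx.
  - split=> [i | i j lt_ij ci2 cj2].
      have := le2 i; rewrite nth0_rcons.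
      by case: eqP => // ->; rewrite nth_default.
    have lt_jc := c2_lt_size j cj2.
    have [k [/andP [lt_ik lt_kj] ck0]] := gap i j lt_ij
      (etrans (nth_c i (ltn_trans lt_ij lt_jc)) ci2)
      (etrans (nth_c j lt_jc) cj2).
    by exists k; rewrite lt_ik lt_kj -nth_c // (ltn_trans lt_kj lt_jc).
  have lt_ic := c2_lt_size i ci2.
  have last2 : nth 0 (rcons c x) (size c) = 2 by rewrite nth0_rcons eqxx.
  have [k [/andP [lt_ik lt_kc] ck0]] :=
    gap i (size c) lt_ic (etrans (nth_c i lt_ic) ci2) last2.
  by exists k; rewrite lt_ik lt_kc -nth_c.
split=> [i | i j lt_ij]; rewrite !nth0_rcons; first by case: eqP.
case: (j =P size c) => [j_eq | _] ri2 rj2.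
  rewrite ltn_eqF -?j_eq // in ri2.
  have [k [/andP [lt_ik lt_kc] ck0]] := cl2 rj2 i ri2.
  by exists k; rewrite lt_ik j_eq lt_kc nth_c.
have lt_jc := c2_lt_size j rj2; rewrite ltn_eqF ?(ltn_trans lt_ij) // in ri2.
have [k [/andP [lt_ik lt_kj] ck0]] := gap i j lt_ij ri2 rj2.
by exists k; rewrite lt_ik lt_kj nth_c // (ltn_trans lt_kj lt_jc).
Qed.

Lemma cg_closed_rcons0 c : cg_closed (rcons c 0).
Proof.
move=> i; rewrite nth0_rcons; case: eqP => // _ ci2.
have lt_ic : i < size c by apply: nth_neq0_lt_size; rewrite ci2.
by exists (size c); rewrite lt_ic size_rcons ltnSn nth0_rcons eqxx.
Qed.

Lemma cg_closed_rcons c x :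
  x != 0 -> cg_closed (rcons c x) <-> x != 2 /\ cg_closed c.
Proof.
move=> x_neq0; have nth_c i : i < size c -> nth 0 (rcons c x) i = nth 0 c i.
  by move=> lt_ic; rewrite nth0_rcons ltn_eqF.
have k_lt_size k :
    k < size (rcons c x) -> nth 0 (rcons c x) k = 0 -> k < size c.
  rewrite size_rcons ltnS leq_eqVlt nth0_rcons => /orP [/eqP -> | //].
  by rewrite eqxx => x0; rewrite x0 in x_neq0.
split=> [cl | [x_neq2 cl] i].
  split.
    apply/eqP => x2; have [|k [/andP [lt_ck lt_kc] ck0]] := cl (size c).
      by rewrite nth0_rcons eqxx.
    by have := k_lt_size k lt_kc ck0; rewrite ltnNge ltnW.
  move=> i ci2; have lt_ic : i < size c by apply: nth_neq0_lt_size; rewrite ci2.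
  have [|k [/andP [lt_ik lt_kc] ck0]] := cl i; first by rewrite nth_c.
  have lt_kc' := k_lt_size k lt_kc ck0.
  by exists k; rewrite lt_ik lt_kc' -nth_c.
rewrite nth0_rcons; case: eqP => [_ x2 | _ /cl [k [/andP [lt_ik lt_kc] ck0]]].
  by rewrite x2 in x_neq2.
by exists k; rewrite lt_ik size_rcons ltnS ltnW // nth_c.
Qed.

Lemma cg_value_bounds c : cg_admissible c ->
  cg_value c < fib (2 * (size c).+1) /\
  (cg_closed c -> cg_value c < fib (2 * size c).+1).
Proof.
elim/last_ind: c => [_ | c x IH /cg_admissible_rcons [le_x2 adm cl2]].
  by rewrite /cg_value big_ord0.
have [lt_val cl_lt_val] := IH adm.
rewrite cg_value_rcons size_rcons !mulnS !add2n in lt_val *.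
have := fibSS (2 * size c).+1; have := fibSS (2 * size c).+2.
case: x le_x2 cl2 => [|[|[|//]]] _ cl2 F4 F3.
- by split=> [|_]; lia.
- split=> [|/cg_closed_rcons [//|_ /cl_lt_val]]; lia.
- have := cl_lt_val (cl2 erefl); split=> [|/cg_closed_rcons [] //]; lia.
Qed.

Lemma is_CG_rcons c x m n : x <= 2 -> (x = 2 -> cg_closed c) ->
  is_CG m c -> n = m + x * fib (2 * (size c).+1) -> is_CG n (rcons c x).
Proof.
move=> le_x2 cl2 [adm <-] ->.
by split; [exact/cg_admissible_rcons | exact: cg_value_rcons].
Qed.

Lemma cg_exists_size t n : n < fib (2 * t.+1) ->
  exists2 c, size c = t & is_CG n c /\ (n < fib (2 * t).+1 -> cg_closed c).
Proof.
elim: t n => [|t IH] n.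
  rewrite ltnS leqn0 => /eqP ->; exists [::] => //.
  split=> [|_ i]; last by rewrite nth_nil.
  by split; [split=> [i | i j _]; rewrite nth_nil | rewrite /cg_value big_ord0].
rewrite !mulnS !add2n in IH * => lt_n.
have F3 := fibSS (2 * t).+1; have F4 := fibSS (2 * t).+2.
have F12 := leq_fib (leqnSn (2 * t).+1).
have extend c x m : size c = t -> x <= 2 -> (x = 2 -> cg_closed c) ->
    is_CG m c -> n = m + x * fib (2 * t).+2 -> is_CG n (rcons c x).
  move=> sc le_x2 cl2 CGm ->.
  by apply: (is_CG_rcons le_x2 cl2 CGm); rewrite sc mulnS add2n.
case: (ltnP n (fib (2 * t).+2)) => [lt2 | ge2].
  have [c sc [CGc _]] := IH n lt2.
  exists (rcons c 0); first by rewrite size_rcons sc.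
  split=> [|_]; last exact: cg_closed_rcons0.
  by apply: extend CGc _; rewrite ?addn0.
case: (ltnP n (2 * fib (2 * t).+2)) => [lt22 | ge22].
  have [c sc [CGc clc]] := IH (n - fib (2 * t).+2) ltac:(lia).
  exists (rcons c 1); first by rewrite size_rcons sc.
  split=> [|lt3]; first by apply: extend CGc _ => //; lia.
  by apply/cg_closed_rcons; split=> //; apply: clc; lia.
have [c sc [CGc clc]] := IH (n - 2 * fib (2 * t).+2) ltac:(lia).
exists (rcons c 2); first by rewrite size_rcons sc.
split=> [|lt3]; last by lia.
have cl_c : cg_closed c by apply: clc; lia.
by apply: extend CGc _ => //; lia.
Qed.

Lemma cg_exists n : exists c, is_CG n c.
Proof.
have lt_n : n < fib (2 * n.+1).
  apply: leq_trans (ltn_fibSS n) (leq_fib _).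
  by rewrite mulnS add2n !ltnS leq_pmull.
by have [c _ [CGc _]] := cg_exists_size lt_n; exists c.
Qed.

Lemma cg_admissible_take j c : cg_admissible c -> cg_admissible (take j c).
Proof.
case=> le2 gap; split=> [i | i i' lt_ii']; rewrite !nth_take0.
  by case: ifP.
case: ifP => lt_ij; case: ifP => lt_i'j // ci2 ci'2.
have [k [/andP [lt_ik lt_ki'] ck0]] := gap i i' lt_ii' ci2 ci'2.
by exists k; rewrite lt_ik lt_ki' nth_take0 (ltn_trans lt_ki' lt_i'j).
Qed.

Lemma cg_value_take j c :
  (forall i, j <= i -> nth 0 c i = 0) -> cg_value (take j c) = cg_value c.
Proof.
move=> vanish; case: (leqP (size c) j) => [le_cj | lt_jc].
  by rewrite take_oversize.
rewrite /cg_value size_takel; last exact: ltnW.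
rewrite -(big_mkord xpredT (fun i => nth 0 c i * fib (2 * i.+1))).
rewrite -(big_mkord xpredT (fun i => nth 0 (take j c) i * fib (2 * i.+1))).
rewrite (big_cat_nat (leq0n j) (ltnW lt_jc)) /= [X in _ + X]big1_seq ?addn0.
  by apply: eq_big_nat => i /andP [_ lt_ij]; rewrite nth_take.
by move=> i /andP [_]; rewrite mem_index_iota => /andP [/vanish -> _].
Qed.

Lemma cg_value_lt_support c j : cg_admissible c ->
  (forall i, j <= i -> nth 0 c i = 0) -> cg_value c < fib (2 * j.+1).
Proof.
move=> adm vanish; rewrite -(cg_value_take vanish).
apply: leq_trans (cg_value_bounds (cg_admissible_take j adm)).1 (leq_fib _).
by rewrite leq_mul2l ltnS size_take_min geq_minl orbT.
Qed.

Lemma mem_CGset c y :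
  y \in CGset c <-> exists2 j, nth 0 c j != 0 & y = fib (2 * j.+1).
Proof.
split=> [/mapP [j] | [j cj_neq0 ->]].
  by rewrite mem_filter => /andP [cj_neq0 _] ->; exists j.
apply/mapP; exists j => //.
by rewrite mem_filter cj_neq0 mem_iota add0n nth_neq0_lt_size.
Qed.

Lemma CGset_le_value c y : y \in CGset c -> y <= cg_value c.
Proof.
move/mem_CGset => [j cj_neq0 ->].
rewrite /cg_value (bigD1 (Ordinal (nth_neq0_lt_size cj_neq0))) //=.
by apply: leq_trans (leq_addr _ _); rewrite leq_pmull // lt0n.
Qed.

Lemma nth_eq0_above_max c j :
  seq_max (CGset c) < fib (2 * j.+1) -> forall i, j <= i -> nth 0 c i = 0.
Proof.
move=> lt_max i le_ji; apply/eqP; apply: contraTT lt_max => ci_neq0.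
have in_i : fib (2 * i.+1) \in CGset c by apply/mem_CGset; exists i.
have le_max : fib (2 * i.+1) <= seq_max (CGset c) := leq_bigmax_seq _ in_i isT.
rewrite -leqNgt (leq_trans _ le_max) //.
by apply: leq_fib; rewrite leq_mul2l ltnS le_ji orbT.
Qed.

Theorem corollary3p2 (k n m : nat) :
  1 <= k -> in_A k n -> in_A k m ->
  (forall cn cm, is_CG n cn -> is_CG m cm ->
     seq_max (CGset cn) < seq_max (CGset cm)) ->
  n < m.
Proof.
move=> _ _ _ lt_max.
have [cn CGn] := cg_exists n; have [cm CGm] := cg_exists m.
have [y y_in lt_y] := seq_max_gt_mem (lt_max cn cm CGn CGm).
have [j _ y_eq] := (mem_CGset cm y).1 y_in.
case: CGn CGm => [adm_n <-] [_ <-].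
apply: leq_trans (CGset_le_value y_in); rewrite y_eq.
by apply: cg_value_lt_support adm_n _; apply: nth_eq0_above_max; rewrite -y_eq.
Qed.
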